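(* Let $\mathbf{f}=(\mathbf{f}_0,\dots,\mathbf{f}_{k-1})$ be uniform in $\mathcal{F}(n,k)$ (assumed nonempty), let $\mathbf{u}$ be a node chosen uniformly among all $n$ nodes of $\mathbf{f}$, let $\mathbf{i}$ be the index of the tree containing $\mathbf{u}$, and let $R_{\mathbf{u}}(\mathbf{f})=((\mathbf{f}_{\mathbf{i}},\mathbf{u}),\mathbf{f}_{\mathbf{i}+1\bmod k},\dots,\mathbf{f}_{\mathbf{i}+k-1\bmod k})$. Then $R_{\mathbf{u}}(\mathbf{f})$ is uniformly distributed on $\mathcal{F}^\bullet(n,k)$. Consequently, the decreasingly sorted tree-size vector of a uniform element of $\mathcal{F}(n,k)$ has the same distribution as that of a uniform element of $\mathcal{F}^\bullet(n,k)$.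
   Context: $\mathcal{F}(n,k)$ is the set of sequences $(f_0,\dots,f_{k-1})$ of $k$ rooted plane complete binary trees (every node has $0$ or $2$ ordered children) with $n$ nodes in total. $\mathcal{F}^\bullet(n,k)$ is the set of $((f_0,v),f_1,\dots,f_{k-1})$ with $(f_0,\dots,f_{k-1})\in\mathcal{F}(n,k)$ and $v$ a node of $f_0$. The tree-size vector of a forest is $(|f_0|,\dots,|f_{k-1}|)$, $|f_i|$ being the number of nodes of $f_i$. *)

From HB Require Import structures.
From mathcomp Require Import all_boot.
Set Implicit Arguments. Unset Strict Implicit. Unset Printing Implicit Defensive.

Inductive tree : Type := Leaf | Node of tree & tree.

Definition tree_eq_dec : forall x y : tree, {x = y} + {x <> y}.
Proof. decide equality. Defined.
HB.instance Definition _ := hasDecEq.Build tree (compareP tree_eq_dec).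

Fixpoint tsize (t : tree) : nat :=
  match t with Leaf => 1 | Node l r => (tsize l + tsize r).+1 end.

(* Nodes of a tree are addressed by their path from the root
   (false = left child, true = right child). *)
Fixpoint is_node (t : tree) (p : seq bool) : bool :=
  match p, t with
  | [::], _ => true
  | b :: p', Node l r => is_node (if b then r else l) p'
  | _ :: _, Leaf => false
  end.

Definition inF (n k : nat) (f : seq tree) : bool :=
  (size f == k) && (sumn (map tsize f) == n).

(* F^bullet(n,k): ((f_0, v), [f_1; ...; f_{k-1}]) with v a node of f_0 *)
Definition pforest := ((tree * seq bool) * seq tree)%type.
Definition pf_trees (g : pforest) : seq tree := g.1.1 :: g.2.
Definition inFp (n k : nat) (g : pforest) : bool :=
  inF n k (pf_trees g) && is_node g.1.1 g.1.2.

(* A forest together with a node u of it: u = (i, p), node p of tree f_i. *)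
Definition fnode := (seq tree * (nat * seq bool))%type.
Definition inU (n k : nat) (x : fnode) : bool :=
  [&& inF n k x.1, x.2.1 < k & is_node (nth Leaf x.1 x.2.1) x.2.2].

Definition Rot (x : fnode) : pforest :=
  let h := rot x.2.1 x.1 in ((head Leaf h, x.2.2), behead h).

Definition sorted_sizes (f : seq tree) : seq nat := sort geq (map tsize f).

Definition has_card (T : eqType) (P : T -> bool) (c : nat) : Prop :=
  exists s : seq T, [/\ uniq s, (forall x, (x \in s) = P x) & size s = c].

(* All sets involved are finite, so uniformity is a matter of counting.  A pointed
   forest g has exactly k preimages (f, u) under R: for each i < k, f is g rotated
   back by i and u is the marked node, placed in tree i.  It remains to show
   k |F•(n,k)| = n |F(n,k)|, and this holds within any rotation-invariant class of
   forests, e.g. those with a given sorted size vector: rotating the class shows that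
   the first trees have the same total size as the j-th trees for every j < k, and
   summing over j gives n per forest. *)

From Pilot Require Import Defs.
From mathcomp Require Import all_boot.
Set Implicit Arguments. Unset Strict Implicit.

Local Notation tsize := Defs.tsize.

Lemma head_rot (T : Type) (x0 : T) j (s : seq T) :
  j < size s -> head x0 (rot j s) = nth x0 s j.
Proof. by move=> ltjs; rewrite /rot -nth0 nth_cat size_drop subn_gt0 ltjs nth_drop addn0. Qed.

Lemma perm_map_rot (T : eqType) j (L : seq (seq T)) :
  uniq L -> (forall f, (rot j f \in L) = (f \in L)) -> perm_eq (map (rot j) L) L.
Proof.
move=> uL rotL; apply: uniq_perm => //; first by rewrite (map_inj_uniq (@rot_inj j _)).
by move=> f; rewrite -{1}(rotrK j f) (mem_map (@rot_inj j _)) -rotL rotrK.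
Qed.

Lemma big_nth_sumn (T : Type) (x0 : T) (F : T -> nat) (f : seq T) :
  \sum_(j < size f) F (nth x0 f j) = sumn (map F f).
Proof. by rewrite sumnE big_map (big_nth x0) big_mkord. Qed.

Lemma muln_sum_head_rot_closed (T : eqType) (x0 : T) (F : T -> nat) k (L : seq (seq T)) :
  (forall j, perm_eq (map (rot j) L) L) -> {in L, forall f, size f = k} ->
  k * \sum_(f <- L) F (head x0 f) = \sum_(f <- L) sumn (map F f).
Proof.
move=> rotL sizeL.
have sum_nth (j : 'I_k) : \sum_(f <- L) F (head x0 f) = \sum_(f <- L) F (nth x0 f j).
  rewrite -(perm_big _ (rotL j)) big_map; apply: eq_big_seq => f fL.
  by rewrite head_rot // sizeL.
rewrite -[k in LHS]card_ord -sum_nat_const (eq_bigr _ (fun j _ => sum_nth j)).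
rewrite exchange_big; apply: eq_big_seq => f fL.
by rewrite -(sizeL f fL) big_nth_sumn.
Qed.

Lemma leq_sumn_map (T : eqType) (F : T -> nat) (x : T) (s : seq T) :
  x \in s -> F x <= sumn (map F s).
Proof.
elim: s => [|y s IHs] //=; rewrite inE => /predU1P [-> | /IHs]; first exact: leq_addr.
by move/leq_trans; apply; apply: leq_addl.
Qed.

Lemma mem_map_cons (T : eqType) (c b : T) (p : seq T) (s : seq (seq T)) :
  (b :: p \in [seq c :: q | q <- s]) = (b == c) && (p \in s).
Proof. by apply/mapP/andP => [[q qs [-> ->]] | [/eqP -> ps]]; last exists p. Qed.

Fixpoint words (T : Type) (s : seq T) (k : nat) : seq (seq T) :=
  if k is k'.+1 then [seq x :: w | x <- s, w <- words s k'] else [:: [::]].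

Lemma mem_words (T : eqType) (s w : seq T) : all (mem s) w -> w \in words s (size w).
Proof.
elim: w => [|x w IHw] /=; first by rewrite mem_seq1.
by case/andP=> xs /IHw; apply: allpairs_f.
Qed.

Lemma has_card_seq (T : eqType) (P : pred T) (s : seq T) :
  uniq s -> s =i P -> has_card P (size s).
Proof. by move=> us sP; exists s. Qed.

Lemma eq_has_card (T : eqType) (P P' : T -> bool) c :
  has_card P c -> P =1 P' -> has_card P' c.
Proof. by move=> [s [us sP size_s]] eqP; exists s; split=> // x; rewrite sP eqP. Qed.

Fixpoint trees_upto (d : nat) : seq tree :=
  if d is d'.+1 then Leaf :: [seq Node l r | l <- trees_upto d', r <- trees_upto d']
  else [:: Leaf].

Lemma mem_trees_upto (t : tree) d : tsize t <= d -> t \in trees_upto d.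
Proof.
elim: t d => [|l IHl r IHr] [|d] //=; rewrite ?mem_head // ltnS => le_lr_d.
rewrite in_cons; apply/orP; right; apply: allpairs_f.
- by apply: IHl; apply: leq_trans le_lr_d; apply: leq_addr.
- by apply: IHr; apply: leq_trans le_lr_d; apply: leq_addl.
Qed.

Definition forests (n k : nat) : seq (seq tree) :=
  [seq f <- undup (words (trees_upto n) k) | inF n k f].

Lemma forests_uniq n k : uniq (forests n k).
Proof. by rewrite filter_uniq ?undup_uniq. Qed.

Lemma mem_forests n k f : (f \in forests n k) = inF n k f.
Proof.
rewrite mem_filter mem_undup andb_idr // => /andP [/eqP <- /eqP sum_f].
apply/mem_words/allP => t tf; apply: mem_trees_upto.
by rewrite -sum_f; apply: leq_sumn_map.
Qed.

Lemma inF_rot n k j f : inF n k (rot j f) = inF n k f.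
Proof. by rewrite /inF size_rot map_rot sumn_rot. Qed.

Lemma card_forests_filter n k (Q : pred (seq tree)) :
  has_card (fun f => inF n k f && Q f) (size [seq f <- forests n k | Q f]).
Proof.
apply: has_card_seq; first by rewrite filter_uniq ?forests_uniq.
by move=> f; rewrite mem_filter mem_forests andbC.
Qed.

Fixpoint nodes (t : tree) : seq (seq bool) :=
  if t is Node l r then [::] :: [seq false :: p | p <- nodes l] ++ [seq true :: p | p <- nodes r]
  else [:: [::]].

Lemma size_nodes t : size (nodes t) = tsize t.
Proof. by elim: t => //= l IHl r IHr; rewrite size_cat !size_map IHl IHr. Qed.

Lemma mem_nodes t p : (p \in nodes t) = is_node t p.
Proof.
elim: t p => [|l IHl r IHr] [|b p] //=; rewrite in_cons mem_cat !mem_map_cons.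
by case: b; rewrite ?IHl ?IHr ?orbF.
Qed.

Lemma nodes_uniq t : uniq (nodes t).
Proof.
have cons_inj (b : bool) : injective (cons b) by move=> p q [].
elim: t => //= l IHl r IHr; rewrite cat_uniq !(map_inj_uniq (cons_inj _)) IHl IHr.
rewrite mem_cat andbT; apply/andP; split.
- by apply/norP; split; apply/mapP => -[].
- apply/hasP => -[[|b p]]; first by move/mapP => -[].
  by rewrite !mem_map_cons => /andP [/eqP ->].
Qed.

Definition point (f : seq tree) (p : seq bool) : pforest := ((head Leaf f, p), behead f).

Lemma pf_trees_point f p : f != [::] -> pf_trees (point f p) = f.
Proof. by case: f. Qed.

Definition pointed_forests (L : seq (seq tree)) : seq pforest :=
  [seq point f p | f <- L, p <- nodes (head Leaf f)].

Lemma size_pointed_forests L :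
  size (pointed_forests L) = \sum_(f <- L) tsize (head Leaf f).
Proof. by rewrite size_allpairs_dep sumnE !big_map; apply: eq_bigr => f _; rewrite size_nodes. Qed.

Lemma pointed_forests_uniq L : uniq L -> [::] \notin L -> uniq (pointed_forests L).
Proof.
move=> uL nilL; apply: allpairs_uniq_dep => // [f _ | [f p] [f' p']]; first exact: nodes_uniq.
move=> /allpairsPdep [x [_ [xL _ /(congr1 tag) /= ->]]].
move=> /allpairsPdep [x' [_ [x'L _ /(congr1 tag) /= ->]]] /= eq_point.
have nonnil y : y \in L -> y != [::] by apply: contraTneq => ->.
have eq_x : x = x'.
  by rewrite -(pf_trees_point p (nonnil x xL)) eq_point pf_trees_point ?nonnil.
by move: eq_point; rewrite eq_x => -[->].
Qed.

Lemma mem_pointed_forests L g : [::] \notin L ->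
  (g \in pointed_forests L) = (pf_trees g \in L) && is_node g.1.1 g.1.2.
Proof.
move=> nilL; apply/allpairsPdep/andP => [[f [p [fL pf ->]]] | [gL g_node]].
  by rewrite pf_trees_point -?mem_nodes //; apply: contraNneq nilL => <-.
by exists (pf_trees g), g.1.2; rewrite mem_nodes; case: g gL g_node => [[t p] r].
Qed.

Lemma card_pointed_forests_rot_invariant n k (Q : pred (seq tree)) :
  (forall j f, Q (rot j f) = Q f) -> 0 < k ->
  exists a b, [/\ has_card (fun f => inF n k f && Q f) a,
                  has_card (fun g => inFp n k g && Q (pf_trees g)) b
                & k * b = n * a].
Proof.
move=> Q_rot k_gt0; set L := [seq f <- forests n k | Q f].
have memL f : (f \in L) = inF n k f && Q f by rewrite mem_filter mem_forests andbC.
have uL : uniq L by rewrite filter_uniq ?forests_uniq.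
have sizeL : {in L, forall f, size f = k} by move=> f; rewrite memL => /andP [/andP [/eqP]].
have nilL : [::] \notin L by apply/negP => /sizeL k0; rewrite -k0 in k_gt0.
exists (size L), (size (pointed_forests L)); split; first exact: card_forests_filter.
  apply: has_card_seq; first exact: pointed_forests_uniq.
  by move=> g; rewrite mem_pointed_forests // memL andbAC.
rewrite size_pointed_forests muln_sum_head_rot_closed //; last first.
  by move=> j; apply: perm_map_rot => // f; rewrite !memL inF_rot Q_rot.
rewrite (eq_big_seq (fun=> n)) ?big_const_seq ?count_predT ?iter_addn_0 //.
by move=> f; rewrite memL => /andP [/andP [_ /eqP]].
Qed.

Definition Rot_fiber (k : nat) (g : pforest) : seq fnode :=
  [seq (rotr i (pf_trees g), (i, g.1.2)) | i <- iota 0 k].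

Lemma Rot_fiber_uniq k g : uniq (Rot_fiber k g).
Proof. by rewrite map_inj_uniq ?iota_uniq // => i j [_ ->]. Qed.

Lemma size_Rot_fiber k g : size (Rot_fiber k g) = k.
Proof. by rewrite size_map size_iota. Qed.

Lemma Rot_rotr i g : Rot (rotr i (pf_trees g), (i, g.1.2)) = g.
Proof. by rewrite /Rot rotrK; case: g => [[]]. Qed.

Lemma Rot_eq_rotr x g : x.2.1 < size x.1 -> Rot x = g ->
  x = (rotr x.2.1 (pf_trees g), (x.2.1, g.1.2)).
Proof.
case: x => f [i p] /= lt_i_f <-; rewrite /Rot /=.
suff -> : pf_trees ((head Leaf (rot i f), p), behead (rot i f)) = rot i f by rewrite rotK.
by case: (rot i f) (size_rot i f) => [|t r] //= sz0; rewrite -sz0 in lt_i_f.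
Qed.

Lemma mem_Rot_fiber n k g x : inFp n k g ->
  (x \in Rot_fiber k g) = inU n k x && (Rot x == g).
Proof.
case/andP => gF g_node; have /andP [/eqP size_g _] := gF.
apply/mapP/andP => [[i] | [/and3P [xF lt_i_k _] /eqP Rot_x]].
  rewrite mem_iota => /= lt_i_k ->; rewrite Rot_rotr eqxx /inU /= /rotr inF_rot gF.
  by rewrite lt_i_k -head_rot ?rotrK ?size_rotr ?size_g.
exists x.2.1; first by rewrite mem_iota.
by apply: Rot_eq_rotr Rot_x; case/andP: xF => /eqP ->.
Qed.

Lemma sorted_sizes_rot j f : sorted_sizes (rot j f) = sorted_sizes f.
Proof.
rewrite /sorted_sizes map_rot; apply/perm_sortP; last by rewrite perm_rot.
- by move=> a b; apply: leq_total.
- by move=> b a c le_ba le_cb; apply: leq_trans le_cb le_ba.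
- by move=> a b /andP [le_ba le_ab]; apply/anti_leq/andP.
Qed.

Theorem mainTheorem13 (n k : nat) :
  (exists f, inF n k f) ->
  exists cF cP : nat,
    [/\ has_card (inF n k) cF,
        has_card (inFp n k) cP,
        (forall g : pforest, inFp n k g ->
           exists c, has_card (fun x : fnode => inU n k x && (Rot x == g)) c
                     /\ c * cP = n * cF)
      & (forall v : seq nat, exists a b,
           [/\ has_card (fun f => inF n k f && (sorted_sizes f == v)) a,
               has_card (fun g : pforest => inFp n k g && (sorted_sizes (pf_trees g) == v)) b
             & a * cP = b * cF])].
Proof.
(* The counting statement does not need F(n,k) to be nonempty. *)
move=> _.
have [-> | k_gt0] := posnP k.
  have no_Fp0 g : inFp n 0 g = false by rewrite /inFp /inF.
  exists (size (forests n 0)), 0; split=> [|||v].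
  - exact/has_card_seq/mem_forests/forests_uniq.
  - by exists [::]; split=> // g; rewrite no_Fp0.
  - by move=> g; rewrite no_Fp0.
  exists (size [seq f <- forests n 0 | sorted_sizes f == v]), 0; rewrite muln0.
  by split=> //; [apply: card_forests_filter | exists [::]; split=> // g; rewrite no_Fp0].
have [cF [cP [card_F card_P k_cP]]] :=
  @card_pointed_forests_rot_invariant n k predT (fun _ _ => erefl) k_gt0.
exists cF, cP; split.
- exact: eq_has_card card_F (fun f => andbT _).
- exact: eq_has_card card_P (fun g => andbT _).
- move=> g gP; exists k; split=> //; rewrite -[k in has_card _ k](size_Rot_fiber k g).
  exact: has_card_seq (Rot_fiber_uniq k g) (fun x => mem_Rot_fiber x gP).
move=> v; have sizes_rot j f : (sorted_sizes (rot j f) == v) = (sorted_sizes f == v).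
  by rewrite sorted_sizes_rot.
have [a [b [card_a card_b k_b]]] := card_pointed_forests_rot_invariant n sizes_rot k_gt0.
exists a, b; split=> //; apply/eqP; rewrite -(eqn_pmul2l k_gt0); apply/eqP.
by rewrite mulnCA k_cP [RHS]mulnA k_b mulnCA mulnA.
Qed.
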